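(* Let $\varepsilon>0$, $\delta\in(0,1)$, $p=1-e^{-\varepsilon}$ and $k=\left\lceil\frac{1}{\varepsilon}\ln\left(\frac{e^{\varepsilon}+2\delta-1}{(e^{\varepsilon}+1)\delta}\right)\right\rceil$. Let $Q$ be a finite set of partitions, and consider databases $D$ in which each user is associated with at most one partition $q\in Q$. For $q\in Q$ let $c_q(D)$ be the number of users in $D$ associated with $q$, and let $Q_D=\{q\in Q: c_q(D)>0\}$. Let $(X_q)_{q\in Q}$ be i.i.d. random variables with the $k$-truncated symmetric geometric distribution with parameter $p$, and set $\hat c_q(D)=c_q(D)+X_q$. Then the mechanism that outputs the set $\{(q,\hat c_q(D)): q\in Q_D \text{ and } \hat c_q(D)>k\}$ is $(\varepsilon,\delta)$-differentially private.
   Context: For $p\in(0,1)$ and an integer $k\ge1$, the $k$-truncated symmetric geometric distribution with parameter $p$ is the distribution on $\mathbb{Z}$ with $\Pr[X=x]=c\,(1-p)^{|x|}$ for $x\in[-k,k]\cap\mathbb{Z}$ and $0$ otherwise, where $c=\frac{p}{1+(1-p)-2(1-p)^{k+1}}$. A randomized mechanism $\mathcal{M}$ is $(\varepsilon,\delta)$-differentially private if for any databases $D,D'$ where $D'$ is obtained from $D$ by adding or removing one user, and all sets $S$ of outputs, $\Pr[\mathcal{M}(D)\in S]\le e^{\varepsilon}\Pr[\mathcal{M}(D')\in S]+\delta$. *)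

From HB Require Import structures.
From mathcomp Require Import all_boot all_order all_algebra.
From mathcomp Require Import finmap.
From mathcomp Require Import reals.
From mathcomp Require Import sequences exp.

Unset Printing Implicit Defensive.

Import Order.TTheory GRing.Theory Num.Theory.
Local Open Scope ring_scope.

Definition tgeom_const {R : realType} (p : R) (k : nat) : R :=
  p / (1 + (1 - p) - 2 * (1 - p) ^+ k.+1).

Definition tgeom_pmf {R : realType} (p : R) (k : nat) (x : int) : R :=
  if (`|x| <= k%:Z)%R then tgeom_const p k * (1 - p) ^+ `|x|%N else 0.

(** A noise value in [-k,k] is encoded by an ordinal i < 2k+1, value i - k. *)
Definition noise_val {k : nat} (i : 'I_(k.*2.+1)) : int := (i%:Z - k%:Z)%R.

(** Databases: finite lists of users (type U); each user is associated
    with at most one partition, given by [part : U -> option Q]. *)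
Definition count_q {U : Type} {Q : eqType} (part : U -> option Q)
  (D : seq U) (q : Q) : nat :=
  count (fun u => part u == Some q) D.

Definition neighbors {U : Type} (D D' : seq U) : Prop :=
  (exists D1 D2 u, D = D1 ++ D2 /\ D' = D1 ++ u :: D2) \/
  (exists D1 D2 u, D' = D1 ++ D2 /\ D = D1 ++ u :: D2).

(** The mechanism, as a deterministic function of the database and the
    noise vector (X_q)_q: outputs {(q, c_q(D) + X_q) : c_q(D) > 0, c_q(D)+X_q > k}. *)
Definition mech_out {U : Type} {Q : finType} (part : U -> option Q) (k : nat)
  (D : seq U) (x : {ffun Q -> 'I_(k.*2.+1)}) : {fset (Q * int)} :=
  [fset ((q, (count_q part D q)%:Z + noise_val (x q))%R) | q : Q
        & ((0 < count_q part D q)%N &&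
           (k%:Z < (count_q part D q)%:Z + noise_val (x q))%R)]%fset.

Definition mech_prob {R : realType} {U : Type} {Q : finType}
  (part : U -> option Q) (p : R) (k : nat) (D : seq U)
  (S : pred {fset (Q * int)}) : R :=
  \sum_(x : {ffun Q -> 'I_(k.*2.+1)})
     (\prod_(q : Q) tgeom_pmf p k (noise_val (x q))) *
     (if S (mech_out part k D x) then 1 else 0).

Definition mech_dp {R : realType} {U : Type} {Q : finType}
  (part : U -> option Q) (p : R) (k : nat) (eps delta : R) : Prop :=
  forall (D D' : seq U), neighbors D D' ->
  forall S : pred {fset (Q * int)},
    mech_prob part p k D S <= expR eps * mech_prob part p k D' S + delta.

From HB Require Import structures.
From mathcomp Require Import all_boot all_order all_algebra.
From mathcomp Require Import finmap.
From mathcomp Require Import reals.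
From mathcomp Require Import sequences exp.
From mathcomp Require Import zify ring lra.
Import Order.TTheory GRing.Theory Num.Theory.
Local Open Scope ring_scope.

(* Neighbouring databases differ in at most one count c_q, and by one.  Shifting
   the noise X_q by one in the opposite direction makes the two released sets
   coincide, and costs at most a factor e^eps in the product density, since
   neighbouring values of the truncated geometric density differ by the factor
   1 - p = e^-eps.  The shift is impossible only when X_q sits at the endpoint of
   [-k, k] towards which it would be pushed; that endpoint has mass
   c (1 - p)^k, which the choice of k makes at most delta. *)

Section ApproximateCoupling.
Variables (R : numDomainType) (T : finType).

Lemma ler_sum_inj (A : {pred T}) (h : T -> T) (F : T -> R) :
  (forall x, 0 <= F x) -> {in A &, injective h} ->
  \sum_(x in A) F (h x) <= \sum_x F x.
Proof.
move=> F0 h_inj; rewrite -big_imset //= [leRHS](bigID (mem (h @: A))) /=.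
by rewrite lerDl sumr_ge0.
Qed.

Lemma approx_coupling_le (V : Type) (w : T -> R) (E delta : R) (A : {pred T})
    (h : T -> T) (O O' : T -> V) (S : pred V) :
  (forall x, 0 <= w x) -> 0 <= E -> {in A &, injective h} ->
  (forall x, x \in A -> w x <= E * w (h x)) ->
  (forall x, x \in A -> O x = O' (h x)) ->
  \sum_(x | x \notin A) w x <= delta ->
  \sum_x w x * (if S (O x) then 1 else 0) <=
    E * \sum_x w x * (if S (O' x) then 1 else 0) + delta.
Proof.
move=> w0 E0 h_inj wE OO' wAc; rewrite (bigID (mem A)) /= lerD //.
- apply: (@le_trans _ _ (E * \sum_(x in A) w (h x) * (if S (O' (h x)) then 1 else 0))).
    rewrite mulr_sumr; apply: ler_sum => x Ax; rewrite OO' // mulrA.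
    by apply: ler_wpM2r; [case: ifP | exact: wE].
  apply: ler_wpM2l => //.
  apply: (ler_sum_inj _ h (fun x => w x * (if S (O' x) then 1 else 0))) => // x.
  by apply: mulr_ge0; last case: ifP.
- apply: le_trans wAc; apply: ler_sum => x _.
  by rewrite -[leRHS]mulr1 ler_wpM2l //; case: ifP.
Qed.

End ApproximateCoupling.

Definition ffun_upd {Q I : finType} (x : {ffun Q -> I}) (q0 : Q) (i : I) :
  {ffun Q -> I} := [ffun q => if q == q0 then i else x q].

Section ProductWeights.
Variables (R : numDomainType) (Q I : finType) (f : I -> R).

Lemma ffun_upd_inj (q0 : Q) (s : I -> I) :
  injective s -> injective (fun x => ffun_upd x q0 (s (x q0))).
Proof.
move=> s_inj x y /ffunP eq_xy; apply/ffunP => q.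
have := eq_xy q; rewrite !ffunE; case: eqP => [-> | //].
by move/s_inj.
Qed.

Lemma prod_ffun_upd_le (E : R) (x : {ffun Q -> I}) (q0 : Q) (i : I) :
  (forall j, 0 <= f j) -> f (x q0) <= E * f i ->
  \prod_q f (x q) <= E * \prod_q f (ffun_upd x q0 i q).
Proof.
move=> f0 fxE; rewrite (bigD1 q0) // [X in _ * X](bigD1 q0) //= ffunE eqxx mulrA.
have -> : \prod_(q | q != q0) f (ffun_upd x q0 i q) = \prod_(q | q != q0) f (x q).
  by apply: eq_bigr => q /negbTE nq; rewrite ffunE nq.
by apply: ler_wpM2r => //; apply: prodr_ge0.
Qed.

Lemma sum_prod_ffun_fixed (q0 : Q) (e : I) :
  \sum_i f i = 1 ->
  \sum_(x : {ffun Q -> I} | x q0 == e) \prod_q f (x q) = f e.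
Proof.
move=> f_sum1.
pose G q j := if q == q0 then (if j == e then f j else 0) else f j.
have := @bigA_distr_bigA R 0 1 *%R +%R Q I G.
have -> : \prod_q \sum_j G q j = f e.
  rewrite (bigD1 q0) //= [X in _ * X]big1 ?mulr1.
    by rewrite /G eqxx -big_mkcond big_pred1_eq.
  by move=> q /negbTE nq; rewrite /G nq.
move=> ->; rewrite big_mkcond /=; apply: eq_bigr => x _.
rewrite (bigD1 q0) //= [in RHS](bigD1 q0) //= /G eqxx.
case: eqP => _; last by rewrite mul0r.
by congr (_ * _); apply: eq_bigr => q /negbTE ->.
Qed.

End ProductWeights.

Section TruncatedGeometric.
Variables (R : realType) (r : R) (k : nat).

Lemma noise_val_le (i : 'I_(k.*2.+1)) : (`|noise_val i| <= k)%N.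
Proof. by rewrite /noise_val; have := ltn_ord i; lia. Qed.

Lemma noise_val_ordS (i : 'I_(k.*2.+1)) :
  i != ord_max -> noise_val (ordS i) = noise_val i + 1.
Proof.
have := ltn_ord i; rewrite -val_eqE /noise_val /= => lt_i ne.
by rewrite modn_small; lia.
Qed.

Lemma noise_val_ord_pred (i : 'I_(k.*2.+1)) :
  i != ord0 -> noise_val (ord_pred i) = noise_val i - 1.
Proof.
move=> ne; rewrite -{2}(ord_predK i) noise_val_ordS ?addrK //.
apply: contraNneq ne => eq_max; rewrite -(ord_predK i) eq_max.
by rewrite -val_eqE /= modnn.
Qed.

Lemma tgeom_pmf_noise_val (i : 'I_(k.*2.+1)) :
  tgeom_pmf (1 - r) k (noise_val i) =
  (1 - r) / (1 + r - 2 * r ^+ k.+1) * r ^+ `|noise_val i|.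
Proof.
by rewrite /tgeom_pmf /tgeom_const lez_nat noise_val_le subKr.
Qed.

Lemma sum_expr_noise_val :
  (1 - r) * \sum_(i < k.*2.+1) r ^+ `|noise_val i| = 1 + r - 2 * r ^+ k.+1.
Proof.
rewrite -(big_mkord xpredT (fun i => r ^+ `|i%:Z - k%:Z|)).
rewrite (big_cat_nat (n := k)) //=; last by lia.
have -> : \sum_(k <= i < k.*2.+1) r ^+ `|i%:Z - k%:Z| = \sum_(i < k.+1) r ^+ i.
  rewrite -{1}(add0n k) big_addn big_mkord.
  have -> : (k.*2.+1 - k = k.+1)%N by lia.
  by apply: eq_bigr => i _; congr (_ ^+ _); lia.
have -> : \sum_(0 <= i < k) r ^+ `|i%:Z - k%:Z| = r * \sum_(i < k) r ^+ i.
  rewrite big_nat_rev mulr_sumr -(big_mkord xpredT (fun i => r * r ^+ i)).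
  by apply: eq_big_nat => i lt_ik; rewrite -exprS; congr (_ ^+ _); lia.
have geom n : (1 - r) * \sum_(i < n) r ^+ i = 1 - r ^+ n.
  by rewrite -opprB mulNr -subrX1 opprB.
by rewrite mulrDr mulrCA !geom exprS; ring.
Qed.

Lemma tgeom_norm_gt0 : 0 < r < 1 -> 0 < 1 + r - 2 * r ^+ k.+1.
Proof.
case/andP=> r_gt0 r_lt1.
have : r ^+ k.+1 <= r by rewrite exprS ger_pMr // exprn_ile1 ?ltW.
move: (r ^+ k.+1) => t; lra.
Qed.

Lemma tgeom_coef_ge0 : 0 < r < 1 -> 0 <= (1 - r) / (1 + r - 2 * r ^+ k.+1).
Proof.
by move=> r01; rewrite divr_ge0 ?ltW ?tgeom_norm_gt0 // subr_gt0; case/andP: r01.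
Qed.

Lemma tgeom_pmf_ge0 (i : 'I_(k.*2.+1)) :
  0 < r < 1 -> 0 <= tgeom_pmf (1 - r) k (noise_val i).
Proof.
move=> r01; rewrite tgeom_pmf_noise_val mulr_ge0 ?tgeom_coef_ge0 // exprn_ge0 //.
by case/andP: r01 => /ltW.
Qed.

Lemma tgeom_pmf_sum1 :
  0 < r < 1 -> \sum_(i < k.*2.+1) tgeom_pmf (1 - r) k (noise_val i) = 1.
Proof.
move=> r01; under eq_bigr do rewrite tgeom_pmf_noise_val.
by rewrite -mulr_sumr mulrAC sum_expr_noise_val mulfV ?gt_eqF ?tgeom_norm_gt0.
Qed.

Lemma tgeom_pmf_step (E : R) (i j : 'I_(k.*2.+1)) :
  0 < r < 1 -> E * r = 1 -> (`|noise_val j| <= `|noise_val i|.+1)%N ->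
  tgeom_pmf (1 - r) k (noise_val i) <= E * tgeom_pmf (1 - r) k (noise_val j).
Proof.
move=> r01 Er ij; rewrite !tgeom_pmf_noise_val mulrCA ler_wpM2l ?tgeom_coef_ge0 //.
case/andP: r01 => r_gt0 r_lt1.
rewrite -[leLHS]mul1r -Er -mulrA -exprS ler_wpM2l ?ler_wiXn2l ?ltW //.
by rewrite -(pmulr_lgt0 _ r_gt0) Er.
Qed.

Lemma tgeom_pmf_edge_le (delta : R) (e : 'I_(k.*2.+1)) :
  0 < r < 1 -> `|noise_val e|%N = k ->
  r ^+ k * (1 - r + 2 * delta * r) <= delta * (1 + r) ->
  tgeom_pmf (1 - r) k (noise_val e) <= delta.
Proof.
move=> r01 ek edge.
rewrite tgeom_pmf_noise_val ek mulrAC ler_pdivrMr ?tgeom_norm_gt0 // exprS.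
move: (r ^+ k) edge => t; nra.
Qed.

End TruncatedGeometric.

Lemma ceil_ln_le_expR (R : realType) (eps a : R) (k : nat) :
  0 < eps -> 0 < a -> k%:Z = Num.ceil (eps^-1 * ln a) -> a <= expR eps ^+ k.
Proof.
move=> eps_gt0 a_gt0 k_def.
have : eps^-1 * ln a <= k%:R by rewrite pmulrn k_def ceil_ge.
rewrite mulrC ler_pdivrMr // => ln_le.
by rewrite -[leLHS]lnK ?posrE // -expRM_natl ler_expR.
Qed.

Lemma k_choice_edge_bound (R : realType) (eps delta : R) (k : nat) :
  0 < eps -> 0 < delta ->
  k%:Z = Num.ceil (eps^-1 * ln ((expR eps + 2 * delta - 1) /
                                  ((expR eps + 1) * delta))) ->
  expR (- eps) ^+ k * (1 - expR (- eps) + 2 * delta * expR (- eps)) <=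
    delta * (1 + expR (- eps)).
Proof.
move=> eps_gt0 delta_gt0 k_def; set r := expR (- eps).
have r_gt0 : 0 < r := expR_gt0 _.
have Er : expR eps * r = 1 := expRxMexpNx_1 eps.
have E_gt1 : 1 < expR eps by rewrite expR_gt1.
set A := expR eps + 2 * delta - 1; set B := (expR eps + 1) * delta.
have A_gt0 : 0 < A by rewrite /A; lra.
have B_gt0 : 0 < B by rewrite /B mulr_gt0 //; lra.
have : A / B <= expR eps ^+ k by apply: ceil_ln_le_expR k_def; rewrite ?divr_gt0.
rewrite ler_pdivrMr // => /(ler_wpM2r (exprn_ge0 k (ltW r_gt0))).
rewrite mulrAC -exprMn Er expr1n mul1r => /(ler_wpM2l (ltW r_gt0)).
have rA : r * A = 1 - r + 2 * delta * r by rewrite -{1}Er /A; ring.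
have -> : r * B = delta * (1 + r) by rewrite -{1}Er /B; ring.
by rewrite mulrA rA mulrC.
Qed.

Section Release.
Variable k : nat.

Definition release (c : nat) (X : int) : option int :=
  if (0 < c)%N && (k%:Z < c%:Z + X) then Some (c%:Z + X) else None.

Lemma release_succ c X : - k%:Z <= X < k%:Z -> release c.+1 X = release c (X + 1).
Proof.
rewrite /release; case: c => [|c] /andP[lo hi] /=.
  by rewrite ifF //; lia.
by have -> : c.+2%:Z + X = c.+1%:Z + (X + 1) by lia.
Qed.

Variables (Q : finType) (U : Type) (part : U -> option Q).

Lemma mem_mech_out (D : seq U) (x : {ffun Q -> 'I_(k.*2.+1)}) (q : Q) (z : int) :
  ((q, z) \in mech_out part k D x) =
    (release (count_q part D q) (noise_val (x q)) == Some z).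
Proof.
apply/imfsetP/eqP => [[q' /= q'_in [-> ->]] | ].
  by move: q'_in; rewrite inE /release => ->.
by rewrite /release; case: ifP => // cond [<-]; exists q; rewrite ?inE.
Qed.

Lemma mech_out_eq (D D' : seq U) (x y : {ffun Q -> 'I_(k.*2.+1)}) :
  (forall q, release (count_q part D q) (noise_val (x q)) =
             release (count_q part D' q) (noise_val (y q))) ->
  mech_out part k D x = mech_out part k D' y.
Proof. by move=> rel; apply/fsetP => -[q z]; rewrite !mem_mech_out rel. Qed.

End Release.

Lemma count_q_insert (Q : finType) (U : Type) (part : U -> option Q)
    (D1 D2 : seq U) (u : U) (q : Q) :
  count_q part (D1 ++ u :: D2) q = ((part u == Some q) + count_q part (D1 ++ D2) q)%N.
Proof. by rewrite /count_q !count_cat /= addnCA. Qed.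

Section PrivacyOfTheMechanism.
Variables (R : realType) (eps delta : R) (k : nat).
Variables (Q : finType) (U : Type) (part : U -> option Q).
Hypotheses (eps_gt0 : 0 < eps) (delta_gt0 : 0 < delta).
Hypothesis k_def :
  k%:Z = Num.ceil (eps^-1 * ln ((expR eps + 2 * delta - 1) /
                                  ((expR eps + 1) * delta))).

Local Notation p := (1 - expR (- eps)).

Let r01 : 0 < expR (- eps) < 1.
Proof. by rewrite expR_gt0 expR_lt1 oppr_lt0. Qed.

Lemma mech_prob_shift (D D' : seq U) (q0 : Q) (e : 'I_(k.*2.+1))
    (s : 'I_(k.*2.+1) -> 'I_(k.*2.+1)) (S : pred {fset (Q * int)}) :
  (forall q, q != q0 -> count_q part D q = count_q part D' q) ->
  injective s -> `|noise_val e|%N = k ->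
  (forall i, i != e -> (`|noise_val (s i)| <= `|noise_val i|.+1)%N) ->
  (forall i, i != e -> release k (count_q part D q0) (noise_val i) =
                       release k (count_q part D' q0) (noise_val (s i))) ->
  mech_prob part p k D S <= expR eps * mech_prob part p k D' S + delta.
Proof.
move=> same_counts s_inj ek s_step s_release.
pose f (i : 'I_(k.*2.+1)) := tgeom_pmf p k (noise_val i).
rewrite /mech_prob; apply: (@approx_coupling_le _ {ffun Q -> 'I_(k.*2.+1)} _
  (fun x => \prod_q f (x q)) _ _ [pred x : {ffun Q -> 'I_(k.*2.+1)} | x q0 != e]
  (fun x => ffun_upd x q0 (s (x q0)))).
- by move=> x; apply: prodr_ge0 => q _; apply: tgeom_pmf_ge0.
- exact: expR_ge0.
- by move=> x y _ _; apply: ffun_upd_inj.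
- move=> x ne; apply: prod_ffun_upd_le => [j|]; first exact: tgeom_pmf_ge0.
  by apply: tgeom_pmf_step; [| exact: expRxMexpNx_1 | exact: s_step].
- move=> x ne; apply: mech_out_eq => q; rewrite ffunE.
  by case: eqP => [-> | /eqP /same_counts ->]; [exact: s_release |].
- under eq_bigl do rewrite inE negbK.
  rewrite sum_prod_ffun_fixed ?tgeom_pmf_sum1 //.
  by apply: tgeom_pmf_edge_le => //; apply: k_choice_edge_bound.
Qed.

Lemma mech_prob_add_one (D D' : seq U) (q0 : Q) (S : pred {fset (Q * int)}) :
  (forall q, q != q0 -> count_q part D q = count_q part D' q) ->
  count_q part D' q0 = (count_q part D q0).+1 ->
  mech_prob part p k D S <= expR eps * mech_prob part p k D' S + delta.
Proof.
move=> same_counts count_succ.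
apply: (@mech_prob_shift D D' q0 ord0 (@ord_pred _)) => //.
- exact: ord_pred_inj.
- by rewrite /noise_val /=; lia.
- by move=> i ne; rewrite noise_val_ord_pred //; lia.
- move=> i ne; have i_gt0 : (0 < i)%N by move: ne; rewrite lt0n -val_eqE.
  rewrite count_succ noise_val_ord_pred // release_succ ?subrK //.
  by move: (ltn_ord i); rewrite /noise_val; lia.
Qed.

Lemma mech_prob_remove_one (D D' : seq U) (q0 : Q) (S : pred {fset (Q * int)}) :
  (forall q, q != q0 -> count_q part D q = count_q part D' q) ->
  count_q part D q0 = (count_q part D' q0).+1 ->
  mech_prob part p k D S <= expR eps * mech_prob part p k D' S + delta.
Proof.
move=> same_counts count_succ.
apply: (@mech_prob_shift D D' q0 ord_max (@ordS _)) => //.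
- exact: ordS_inj.
- by rewrite /noise_val /=; lia.
- by move=> i ne; rewrite noise_val_ordS //; lia.
- move=> i ne; have i_neq : (i != k.*2 :> nat) by move: ne; rewrite -val_eqE.
  rewrite count_succ noise_val_ordS // release_succ //.
  by move: (ltn_ord i); rewrite /noise_val; lia.
Qed.

Lemma mech_prob_same_counts (D D' : seq U) (S : pred {fset (Q * int)}) :
  (forall q, count_q part D q = count_q part D' q) ->
  mech_prob part p k D S <= expR eps * mech_prob part p k D' S + delta.
Proof.
move=> same_counts.
have -> : mech_prob part p k D' S = mech_prob part p k D S.
  apply: eq_bigr => x _.
  by rewrite (@mech_out_eq k _ _ part D' D x x) // => q; rewrite same_counts.
apply: ler_wpDr; first exact: ltW.
apply: ler_peMl; last by rewrite ltW // expR_gt1.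
apply: sumr_ge0 => x _; apply: mulr_ge0; last by case: ifP.
by apply: prodr_ge0 => q _; apply: tgeom_pmf_ge0.
Qed.

Lemma mech_prob_insert_user (D1 D2 : seq U) (u : U) (S : pred {fset (Q * int)}) :
  mech_prob part p k (D1 ++ D2) S <=
    expR eps * mech_prob part p k (D1 ++ u :: D2) S + delta.
Proof.
case part_u: (part u) => [q0|]; last first.
  by apply: mech_prob_same_counts => q; rewrite count_q_insert part_u.
apply: (@mech_prob_add_one _ _ q0) => [q ne|]; rewrite count_q_insert part_u.
  by rewrite (inj_eq Some_inj) eq_sym (negbTE ne).
by rewrite eqxx.
Qed.

Lemma mech_prob_delete_user (D1 D2 : seq U) (u : U) (S : pred {fset (Q * int)}) :
  mech_prob part p k (D1 ++ u :: D2) S <=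
    expR eps * mech_prob part p k (D1 ++ D2) S + delta.
Proof.
case part_u: (part u) => [q0|]; last first.
  by apply: mech_prob_same_counts => q; rewrite count_q_insert part_u.
apply: (@mech_prob_remove_one _ _ q0) => [q ne|]; rewrite count_q_insert part_u.
  by rewrite (inj_eq Some_inj) eq_sym (negbTE ne).
by rewrite eqxx.
Qed.

End PrivacyOfTheMechanism.

Theorem theorem6 (R : realType) (eps delta p : R) (k : nat)
  (Q : finType) (U : Type) (part : U -> option Q) :
  0 < eps -> 0 < delta -> delta < 1 ->
  p = 1 - expR (- eps) ->
  k%:Z = Num.ceil (eps^-1 * ln ((expR eps + 2 * delta - 1) /
                                  ((expR eps + 1) * delta))) ->
  mech_dp part p k eps delta.
Proof.
move=> eps_gt0 delta_gt0 _ -> k_def D D' [] [D1 [D2 [u [-> ->]]]] S.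
  exact: mech_prob_insert_user.
exact: mech_prob_delete_user.
Qed.
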